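(* Let $\pi$ be a projective unitary representation of a countable group $G$ on a Hilbert space $H$ such that the set $\mathcal{B}_\pi$ of Bessel vectors of $\pi$ is dense in $H$ and $\pi$ admits a Riesz sequence vector. Suppose $\xi\in H$ is such that $\mathrm{range}(\Theta_{\xi,\pi})$ is not dense in $\ell^2(G)$. Then there exists a nonzero vector $x\in H$ such that $\mathrm{range}(\Theta_{x,\pi})$ and $\mathrm{range}(\Theta_{\xi,\pi})$ are orthogonal.
   Context: A projective unitary representation of $G$ on $H$ is a map $g\mapsto\pi(g)$ into unitaries with $\pi(g)\pi(h)=\mu(g,h)\pi(gh)$, $\mu:G\times G\to\mathbb{T}$. $\xi$ is a Bessel vector (resp. Riesz sequence vector) for $\pi$ if $\{\pi(g)\xi\}_{g\in G}$ is a Bessel sequence (resp. a Riesz basis for its closed span). The analysis operator $\Theta_{x,\pi}(y)=\sum_{g\in G}\langle y,\pi(g)x\rangle\chi_g$ ($\{\chi_g\}$ the standard basis of $\ell^2(G)$) is defined on $\{y\in H:\sum_g|\langle y,\pi(g)x\rangle|^2<\infty\}$. *)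

From HB Require Import structures.
From mathcomp Require Import all_boot all_order all_algebra.
From mathcomp Require Import classical_sets boolp reals constructive_ereal ereal esum.
From mathcomp Require Import complex.
Set Implicit Arguments. Unset Strict Implicit. Unset Printing Implicit Defensive.
Import Order.TTheory GRing.Theory Num.Theory.
Local Open Scope classical_set_scope.
Local Open Scope ring_scope.

Section Defs.
Variable R : realType.
Local Notation C := (R[i]).

Definition sqmod (z : C) : R := complex.Re (`|z| ^+ 2).

Section Hilbert.
Variable H : lmodType C.

Definition is_inner_product (ip : H -> H -> C) : Prop :=
  [/\ (forall (a : C) (x y z : H), ip (a *: x + y) z = a * ip x z + ip y z),
      (forall x y : H, ip y x = (ip x y)^*),
      (forall x : H, 0 <= ip x x) &
      (forall x : H, ip x x = 0 -> x = 0)].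

Definition hnorm2 (ip : H -> H -> C) (x : H) : R := complex.Re (ip x x).

Definition ip_complete (ip : H -> H -> C) : Prop :=
  forall u : nat -> H,
    (forall e : R, 0 < e -> exists N : nat, forall m n : nat,
        (N <= m)%N -> (N <= n)%N -> hnorm2 ip (u m - u n) < e) ->
    exists l : H, forall e : R, 0 < e -> exists N : nat, forall n : nat,
        (N <= n)%N -> hnorm2 ip (u n - l) < e.

Definition is_hilbert (ip : H -> H -> C) : Prop :=
  is_inner_product ip /\ ip_complete ip.

Definition unitary (ip : H -> H -> C) (U : H -> H) : Prop :=
  [/\ (forall (a : C) (x y : H), U (a *: x + y) = a *: U x + U y),
      (forall x y : H, ip (U x) (U y) = ip x y) &
      (forall y : H, exists x : H, U x = y)].

Variable G : groupType.

Definition proj_unitary_rep (ip : H -> H -> C) (pi : G -> H -> H) : Prop :=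
  (forall g : G, unitary ip (pi g)) /\
  exists mu : G -> G -> C,
    (forall g h : G, `|mu g h| = 1) /\
    (forall (g h : G) (x : H), pi g (pi h x) = mu g h *: pi (g * h)%g x).

Definition bessel_vector (ip : H -> H -> C) (pi : G -> H -> H) (xi : H) : Prop :=
  exists B : R, forall y : H,
    (\esum_(g in [set: G]) (sqmod (ip y (pi g xi)))%:E <= (B * hnorm2 ip y)%:E)%E.

(* Riesz sequence vector: {pi g xi}_g is a Riesz sequence, i.e. a Riesz basis
   of its closed linear span (Riesz bounds A, B on finitely supported
   coefficient families) *)
Definition riesz_vector (ip : H -> H -> C) (pi : G -> H -> H) (xi : H) : Prop :=
  exists A B : R, 0 < A /\ 0 < B /\
    forall (s : seq G) (c : G -> C), uniq s ->
      A * \sum_(g <- s) sqmod (c g)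
        <= hnorm2 ip (\sum_(g <- s) c g *: pi g xi)
        <= B * \sum_(g <- s) sqmod (c g).

Definition bessel_dense (ip : H -> H -> C) (pi : G -> H -> H) : Prop :=
  forall (x : H) (e : R), 0 < e ->
    exists2 y : H, bessel_vector ip pi y & hnorm2 ip (x - y) < e.

Definition theta_dom (ip : H -> H -> C) (pi : G -> H -> H) (x y : H) : Prop :=
  (\esum_(g in [set: G]) (sqmod (ip y (pi g x)))%:E < +oo)%E.

Definition theta (ip : H -> H -> C) (pi : G -> H -> H) (x y : H) : G -> C :=
  fun g => ip y (pi g x).

Definition theta_range (ip : H -> H -> C) (pi : G -> H -> H) (x : H)
  : set (G -> C) :=
  [set a | exists2 y, theta_dom ip pi x y & a = theta ip pi x y].

End Hilbert.

Section L2.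
Variable G : choiceType.

Definition countable_type : Prop := exists f : G -> nat, injective f.

Definition in_l2 (a : G -> C) : Prop :=
  (\esum_(g in [set: G]) (sqmod (a g))%:E < +oo)%E.

Definition l2_dist2 (a b : G -> C) : \bar R :=
  \esum_(g in [set: G]) (sqmod (a g - b g))%:E.

Definition dense_in_l2 (S : set (G -> C)) : Prop :=
  forall b : G -> C, in_l2 b -> forall e : R, 0 < e ->
    exists2 a, S a & (l2_dist2 a b < e%:E)%E.

Definition has_usum (f : G -> C) (s : C) : Prop :=
  forall e : R, 0 < e -> exists s0 : seq G, forall t : seq G,
    uniq t -> {subset s0 <= t} -> complex.Re `|\sum_(g <- t) f g - s| < e.

Definition l2_ip_is (a b : G -> C) (s : C) : Prop :=
  has_usum (fun g => a g * (b g)^*) s.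

Definition l2_orthogonal (S T : set (G -> C)) : Prop :=
  forall a b, S a -> T b -> l2_ip_is a b 0.
End L2.
End Defs.

(* Let V be the set of sums Σ_g Θ_ξ(z)(g) π(g)η, over those z for which the sum
   converges unconditionally, where η is a Riesz sequence vector; V is a π-invariant
   linear subspace.  Let p be the orthogonal projection of η onto the closure of V.
   If p = η, every π(g)η lies in the closure of V, hence so does Σ_g b(g) π(g)η for
   every b in l^2(G), and the lower Riesz bound turns approximation of this vector
   by V into approximation of b by the range of Θ_ξ: that range would be dense.
   Otherwise x = η - p is nonzero and π(h)x is orthogonal to V for every h, so that
   Θ_x(y)(h) = <y - Py, π(h)η>, with Py the projection of y onto the closure of V;
   pairing with Θ_ξ(z) then gives <y - Py, Σ_g Θ_ξ(z)(g) π(g)η> = 0. *)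

From HB Require Import structures.
From mathcomp Require Import all_boot all_order all_algebra.
From mathcomp Require Import classical_sets boolp reals constructive_ereal ereal esum.
From mathcomp Require Import complex.
From mathcomp Require Import finmap fsbigop cardinality.
From mathcomp Require Import ring lra.
Set Implicit Arguments. Unset Strict Implicit. Unset Printing Implicit Defensive.
Import Order.TTheory GRing.Theory Num.Theory.
Local Open Scope classical_set_scope.
Local Open Scope ring_scope.

Section SquaredModulus.
Variable R : realType.
Implicit Types (z : R[i]) (a b t : R).

Lemma sqmodE z : sqmod z = complex.Re z ^+ 2 + complex.Im z ^+ 2.
Proof. by case: z => a b; rewrite /sqmod sqr_normc /=; simpc; rewrite /= !expr2. Qed.

Lemma sqmod_ge0 z : 0 <= sqmod z.
Proof. by rewrite sqmodE addr_ge0 ?sqr_ge0. Qed.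

Lemma sqmod_eq0 z : sqmod z = 0 -> z = 0.
Proof.
case: z => a b; rewrite sqmodE /= => h.
by have [-> ->] : a = 0 /\ b = 0 by split; nra.
Qed.

Lemma sqmod0 : sqmod (0 : R[i]) = 0.
Proof. by rewrite sqmodE /= expr0n addr0. Qed.

Lemma sqmodN z : sqmod (- z) = sqmod z.
Proof. by case: z => a b; rewrite !sqmodE /= !sqrrN. Qed.

Lemma sqmod_real t : sqmod t%:C%C = t ^+ 2.
Proof. by rewrite sqmodE /= expr0n addr0. Qed.

Lemma Re_normc_lt z e : 0 < e -> sqmod z < e ^+ 2 -> complex.Re `|z| < e.
Proof.
move=> e_gt0; rewrite normc_def sqmodE /= => lt_z.
by rewrite -[e]gtr0_norm // -sqrtr_sqr ltr_sqrt ?exprn_gt0.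
Qed.

End SquaredModulus.

Lemma sqr_le_of_quadratic_ge0 (R : realFieldType) (a r b : R) : 0 < b ->
  (forall t, 0 <= a + 2 * t * r + t ^+ 2 * b) -> r ^+ 2 <= a * b.
Proof.
move=> b_gt0 /(_ (- (r / b))); set t := r / b => h.
have rE : r = t * b by rewrite divfK ?gt_eqF.
rewrite rE in h *; have := mulr_ge0 (ltW b_gt0) h; nra.
Qed.

Section InnerProduct.
Variables (R : realType) (H : lmodType R[i]) (ip : H -> H -> R[i]).
Hypothesis ipP : is_inner_product ip.
Local Notation n := (hnorm2 ip).
Implicit Types (x y z : H) (s : R[i]) (t : R).

Lemma ipDZl s x y z : ip (s *: x + y) z = s * ip x z + ip y z.
Proof. by case: ipP. Qed.

Lemma ipC x y : ip y x = (ip x y)^*.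
Proof. by case: ipP. Qed.

Lemma ipDl x y z : ip (x + y) z = ip x z + ip y z.
Proof. by rewrite -{1}(scale1r x) ipDZl mul1r. Qed.

Lemma ip0l z : ip 0 z = 0.
Proof. by apply: (addrI (ip 0 z)); rewrite addr0 -ipDl addr0. Qed.

Lemma ipZl s x z : ip (s *: x) z = s * ip x z.
Proof. by rewrite -[s *: x]addr0 ipDZl ip0l addr0. Qed.

Lemma ip0r z : ip z 0 = 0.
Proof. by rewrite ipC ip0l rmorph0. Qed.

Lemma ipDr x y z : ip z (x + y) = ip z x + ip z y.
Proof. by rewrite !(ipC _ z) ipDl rmorphD. Qed.

Lemma ipZr s x z : ip z (s *: x) = s^* * ip z x.
Proof. by rewrite !(ipC _ z) ipZl rmorphM. Qed.

Lemma ipNr x z : ip z (- x) = - ip z x.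
Proof. by rewrite -scaleN1r ipZr rmorphN1 mulN1r. Qed.

Lemma ipBr x y z : ip z (x - y) = ip z x - ip z y.
Proof. by rewrite ipDr ipNr. Qed.

Lemma ip_sumr (I : Type) (r : seq I) (F : I -> H) z :
  ip z (\sum_(i <- r) F i) = \sum_(i <- r) ip z (F i).
Proof. by elim: r => [|i r IH]; rewrite ?big_nil ?ip0r // !big_cons ipDr IH. Qed.

Lemma ipxx x : ip x x = (n x)%:C%C.
Proof.
case: ipP => _ _ /(_ x) + _; rewrite /hnorm2.
by case: (ip x x) => a b; rewrite lecE /= => /andP[/eqP-> _].
Qed.

Lemma hnorm2_ge0 x : 0 <= n x.
Proof. by case: ipP => _ _ /(_ x) + _; rewrite /hnorm2 lecE => /andP[]. Qed.

Lemma hnorm2_eq0 x : n x = 0 -> x = 0.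
Proof. by case: ipP => _ _ _ ip_eq0 nx0; apply: ip_eq0; rewrite ipxx nx0. Qed.

Lemma hnorm20 : n 0 = 0.
Proof. by rewrite /hnorm2 ip0l. Qed.

Lemma hnorm2D x y : n (x + y) = n x + 2 * complex.Re (ip x y) + n y.
Proof.
rewrite {1}/hnorm2 ipDl !ipDr (ipC x y) !ipxx.
by case: (ip x y) => a b /=; ring.
Qed.

Lemma hnorm2Z s x : n (s *: x) = sqmod s * n x.
Proof. by rewrite /hnorm2 ipZl ipZr ipxx sqmodE; case: s => a b /=; ring. Qed.

Lemma hnorm2N x : n (- x) = n x.
Proof. by rewrite -scaleN1r hnorm2Z sqmodN sqmodE /= expr1n expr0n addr0 mul1r. Qed.

Lemma hnorm2BC x y : n (x - y) = n (y - x).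
Proof. by rewrite -hnorm2N opprB. Qed.

Lemma hnorm2B x y : n (x - y) = n x - 2 * complex.Re (ip x y) + n y.
Proof. by rewrite hnorm2D ipNr hnorm2N /=; ring. Qed.

Lemma hnorm2_parallelogram x y : n (x + y) + n (x - y) = 2 * n x + 2 * n y.
Proof. by rewrite hnorm2D hnorm2B; ring. Qed.

Lemma hnorm2D_le2 x y : n (x + y) <= 2 * n x + 2 * n y.
Proof. by have := hnorm2_parallelogram x y; have := hnorm2_ge0 (x - y); lra. Qed.

Lemma hnorm2_split x y z : n (x - z) <= 2 * n (x - y) + 2 * n (y - z).
Proof. by rewrite -(subrKA y) hnorm2D_le2. Qed.

Lemma hnorm2DZ_lt s x y e :
  n x < e / (4 * (sqmod s + 1)) -> n y < e / 4 -> n (s *: x + y) < e.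
Proof.
move=> lt_x lt_y; have s1_gt0 : 0 < sqmod s + 1 by have := sqmod_ge0 s; lra.
apply: le_lt_trans (hnorm2D_le2 _ _) _; rewrite hnorm2Z.
have : sqmod s * n x <= (sqmod s + 1) * (e / (4 * (sqmod s + 1))).
  by apply: ler_pM; rewrite ?sqmod_ge0 ?hnorm2_ge0 ?lerDl // ltW.
have -> : (sqmod s + 1) * (e / (4 * (sqmod s + 1))) = e / 4 by field; lra.
lra.
Qed.

Lemma Re_ip_le t x y : 0 < t -> 2 * complex.Re (ip x y) <= t * n x + t^-1 * n y.
Proof.
move=> t_gt0; have := hnorm2_ge0 (t%:C%C *: x - y).
rewrite hnorm2B hnorm2Z sqmod_real ipZl.
case: (ip x y) => a b /=; rewrite mul0r subr0 => ge0.
have -> : t * n x + t^-1 * n y = t^-1 * (t ^+ 2 * n x + n y) by field; lra.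
rewrite -(ler_pM2l t_gt0) [leRHS]mulrA mulfV ?gt_eqF // mul1r; lra.
Qed.

Lemma hnorm2D_le t x y : 0 < t -> n (x + y) <= (1 + t) * n x + (1 + t^-1) * n y.
Proof. by move=> /(Re_ip_le x y); rewrite hnorm2D; lra. Qed.

Lemma cauchy_schwarz x y : sqmod (ip x y) <= n x * n y.
Proof.
set c := ip x y; have [y0 | ny_neq0] := eqVneq (n y) 0.
  by rewrite /c (hnorm2_eq0 y0) ip0r sqmod0 hnorm20 mulr0.
have [c0 | c_neq0] := eqVneq (sqmod c) 0; first by rewrite c0 mulr_ge0 ?hnorm2_ge0.
have c_gt0 : 0 < sqmod c by rewrite lt_neqAle eq_sym c_neq0 sqmod_ge0.
have ny_gt0 : 0 < n y by rewrite lt_neqAle eq_sym ny_neq0 hnorm2_ge0.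
suff : sqmod c ^+ 2 <= n x * (sqmod c * n y).
  by rewrite expr2 mulrCA ler_pM2l.
apply: sqr_le_of_quadratic_ge0 => [|t]; first exact: mulr_gt0.
have := hnorm2_ge0 (x + (t%:C%C * c) *: y).
rewrite hnorm2D hnorm2Z ipZr -/c !sqmodE.
by clear c_neq0 c_gt0; case: c => a b /=; lra.
Qed.

End InnerProduct.

Section SeqSums.
Variables (R : realType) (T : choiceType) (p : T -> R).

Lemma sum_le_esum (t : seq T) : uniq t ->
  ((\sum_(g <- t) p g)%:E <= \esum_(g in [set: T]) (p g)%:E)%E.
Proof.
move=> t_uniq; apply: esum_ge; exists [set` t]; first by split; first exact: finite_seq.
by rewrite -fsbig_seq // sumEFin.
Qed.

Lemma esum_le (K : R) : (forall t : seq T, uniq t -> \sum_(g <- t) p g <= K) ->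
  (\esum_(g in [set: T]) (p g)%:E <= K%:E)%E.
Proof.
move=> sum_le; apply: ge_ereal_sup => _ [X [finX _] <-].
by rewrite fsbig_finite // sumEFin lee_fin sum_le // fset_uniq.
Qed.

Lemma finite_esum_sup : (forall g, 0 <= p g) ->
  (\esum_(g in [set: T]) (p g)%:E < +oo)%E ->
  exists r : R, (forall t, uniq t -> \sum_(g <- t) p g <= r) /\
    (forall e, 0 < e -> exists2 t, uniq t & r < \sum_(g <- t) p g + e).
Proof.
move=> p_ge0; have : (0 <= \esum_(g in [set: T]) (p g)%:E)%E.
  by apply: esum_ge0 => g _; rewrite lee_fin.
case E : esum => [r| |] // _ _; exists r; split => [t t_uniq|e e_gt0].
  by rewrite -lee_fin -E sum_le_esum.
have : ((r - e)%:E < \esum_(g in [set: T]) (p g)%:E)%E by rewrite E lte_fin; lra.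
move=> /ereal_sup_gt [_ [X [finX _] <-]]; rewrite fsbig_finite // sumEFin lte_fin.
by move=> lt_sum; exists (fset_set X); [exact: fset_uniq | lra].
Qed.

End SeqSums.

Lemma invSn_gt0 (R : numFieldType) k : 0 < (k.+1%:R : R)^-1.
Proof. by rewrite invr_gt0 ltr0n. Qed.

Lemma invSn_lt (R : archiFieldType) (e : R) : 0 < e ->
  exists N, forall k, (N <= k)%N -> (k.+1%:R)^-1 < e.
Proof.
move=> e_gt0; exists (Num.Def.archi_bound e^-1) => k le_Nk.
rewrite -[e]invrK ltf_pV2 ?posrE ?invr_gt0 ?ltr0n //.
apply: lt_le_trans (archi_boundP _) _; first by rewrite invr_ge0 ltW.
by rewrite ler_nat (leq_trans le_Nk).
Qed.

(* Squared norms are not subadditive; [hnorm2D_le] with small [t] stands in for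
   the triangle inequality. *)
Lemma le_of_weighted_le (R : realFieldType) (a b : R) : 0 <= b ->
  (forall t e, 0 < t -> 0 < e -> a <= (1 + t) * b + e) -> a <= b.
Proof.
move=> b_ge0 le_ab; apply/ler_addgt0Pr => e e_gt0.
have t_gt0 : 0 < e / 2 / (b + 1) by rewrite !divr_gt0 //; lra.
apply: le_trans (le_ab _ (e / 2) t_gt0 _) _; first lra.
have : e / 2 / (b + 1) * b <= e / 2.
  by rewrite mulrAC ler_pdivrMr ?ler_pM2l //; lra.
lra.
Qed.

Section Hilbert.
Variables (R : realType) (H : lmodType R[i]) (ip : H -> H -> R[i]).
Hypothesis ipP : is_inner_product ip.
Local Notation n := (hnorm2 ip).
Implicit Types (V : set H) (x y v w : H).

Definition linear_subspace V := V 0 /\ forall a v w, V v -> V w -> V (a *: v + w).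

Definition hclosure V : set H :=
  [set v | forall e, 0 < e -> exists2 w, V w & n (v - w) < e].

Definition perp V x := forall w, V w -> ip x w = 0.

Definition hcvg (u : nat -> H) (l : H) :=
  forall e, 0 < e -> exists N, forall k, (N <= k)%N -> n (u k - l) < e.

Lemma linear_subspaceD V v w : linear_subspace V -> V v -> V w -> V (v + w).
Proof. by case=> _ Vlin Vv Vw; have := Vlin 1 v w Vv Vw; rewrite scale1r. Qed.

Lemma linear_subspaceZ V a v : linear_subspace V -> V v -> V (a *: v).
Proof. by case=> V0 Vlin Vv; have := Vlin a v 0 Vv V0; rewrite addr0. Qed.

Lemma hclosure_sub V : V `<=` hclosure V.
Proof. by move=> v Vv e e_gt0; exists v; rewrite // subrr hnorm20. Qed.

Lemma hclosure_linear_subspace V : linear_subspace V -> linear_subspace (hclosure V).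
Proof.
move=> [V0 Vlin]; split => [|a v w clv clw e e_gt0]; first exact: hclosure_sub.
have a_gt0 : 0 < 4 * (sqmod a + 1) by have := sqmod_ge0 a; lra.
have [v' Vv' lt_v] := clv _ (divr_gt0 e_gt0 a_gt0).
have [w' Vw' lt_w] := clw (e / 4) (divr_gt0 e_gt0 (ltr0n _ 4)).
exists (a *: v' + w'); first exact: Vlin.
by rewrite opprD addrACA -scalerBr (hnorm2DZ_lt ipP).
Qed.

Lemma hclosure_idem V : hclosure (hclosure V) `<=` hclosure V.
Proof.
move=> v clv e e_gt0; have e4_gt0 : 0 < e / 4 by rewrite divr_gt0.
have [w clw lt_vw] := clv _ e4_gt0; have [w' Vw' lt_ww'] := clw _ e4_gt0.
by exists w' => //; apply: le_lt_trans (hnorm2_split ipP v w w') _; lra.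
Qed.

Lemma perp_hclosure V x v : perp V x -> hclosure V v -> ip x v = 0.
Proof.
move=> xV clv; apply: sqmod_eq0; apply/eqP; rewrite eq_le sqmod_ge0 andbT.
apply/ler_addgt0Pr => e e_gt0; rewrite add0r.
have d_gt0 : 0 < e / (n x + 1) by rewrite divr_gt0 //; have := hnorm2_ge0 ipP x; lra.
have [w Vw lt_vw] := clv _ d_gt0.
rewrite -[v](subrK w) (ipDr ipP) (xV _ Vw) addr0.
apply: le_trans (cauchy_schwarz ipP _ _) _.
apply: le_trans (_ : (n x + 1) * (e / (n x + 1)) <= e); last first.
  by rewrite mulrC divfK // gt_eqF //; have := hnorm2_ge0 ipP x; lra.
by apply: ler_pM; rewrite ?hnorm2_ge0 ?lerDl // ltW.
Qed.

Lemma hclosure_lb V y d : (forall v, V v -> d <= n (y - v)) ->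
  forall q, hclosure V q -> d <= n (y - q).
Proof.
move=> lb q clq; apply: le_of_weighted_le (hnorm2_ge0 ipP _) _ => t e t_gt0 e_gt0.
have w_gt0 : 0 < 1 + t^-1 by rewrite addr_gt0 ?invr_gt0.
have [v Vv lt_qv] := clq _ (divr_gt0 e_gt0 w_gt0).
apply: le_trans (lb _ Vv) _; rewrite -[y - v](subrKA q).
apply: le_trans (hnorm2D_le ipP _ _ t_gt0) _; rewrite lerD2l.
by rewrite mulrC -ler_pdivlMr // ltW.
Qed.

Lemma parallelogram_min V y d v w : linear_subspace V ->
  (forall v, V v -> d <= n (y - v)) -> V v -> V w ->
  n (v - w) <= 2 * n (y - v) + 2 * n (y - w) - 4 * d.
Proof.
move=> subV lb Vv Vw; pose m := (2 : R[i])^-1 *: (v + w).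
have Vm : V m by apply: linear_subspaceZ => //; apply: linear_subspaceD.
have := hnorm2_parallelogram ipP (y - v) (y - w).
have -> : y - v - (y - w) = w - v by rewrite opprB addrC subrKA.
have -> : y - v + (y - w) = (y - m) + (y - m).
  rewrite addrACA [RHS]addrACA -!opprD; congr (_ - _).
  have half : (2 : R[i])^-1 + 2^-1 = 1 by field.
  by rewrite /m -scalerDl half scale1r.
rewrite (hnorm2D ipP) (ipxx ipP) (hnorm2BC ipP) /=.
by have := lb _ Vm; lra.
Qed.

Lemma perp_of_min x w : (forall s, n x <= n (x + s *: w)) -> ip x w = 0.
Proof.
move=> x_min; set c := ip x w; pose l := (n w + 1)^-1.
have nw_ge0 := hnorm2_ge0 ipP w.
have l_gt0 : 0 < l by rewrite invr_gt0; lra.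
have l_lt : l * n w < 1 by rewrite mulrC ltr_pdivrMr; lra.
have := x_min (- (l%:C%C * c)).
rewrite (hnorm2D ipP) (hnorm2Z ipP) (ipZr ipP) -/c sqmodN !sqmodE.
move: (sqmod_ge0 c); rewrite sqmodE.
case: c => a b /= ab_ge0 le_x.
have lq_le0 : l * (a ^+ 2 + b ^+ 2) <= 0 by nra.
have q0 : a ^+ 2 + b ^+ 2 = 0 by nra.
by have [-> ->] : a = 0 /\ b = 0 by split; nra.
Qed.

Hypothesis ipc : ip_complete ip.

Lemma hcvg_of_rate (u : nat -> H) (K : R) : 0 < K ->
  (forall k m, n (u k - u m) <= K * ((k.+1%:R)^-1 + (m.+1%:R)^-1)) ->
  exists l, hcvg u l.
Proof.
move=> K_gt0 rate; apply: ipc => e e_gt0.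
have [N ltN] := invSn_lt (divr_gt0 e_gt0 (mulr_gt0 (ltr0n _ 2) K_gt0)).
exists N => k m le_Nk le_Nm; apply: le_lt_trans (rate k m) _.
have := ltN k le_Nk; have := ltN m le_Nm.
rewrite !ltr_pdivlMr ?mulr_gt0 //; move: (k.+1%:R^-1) (m.+1%:R^-1) => ik im; lra.
Qed.

Lemma hcvg_hclosure V u l : (forall k, V (u k)) -> hcvg u l -> hclosure V l.
Proof.
move=> Vu ul e e_gt0; have [N ltN] := ul e e_gt0.
by exists (u N); rewrite // hnorm2BC ?ltN.
Qed.

Lemma hnorm2_le_of_hcvg u l y d : hcvg u l -> 0 <= d ->
  (forall k, n (y - u k) < d + (k.+1%:R)^-1) -> n (y - l) <= d.
Proof.
move=> ul d_ge0 lt_u; apply: le_of_weighted_le d_ge0 _ => t e t_gt0 e_gt0.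
have t1_gt0 : 0 < 1 + t by rewrite addr_gt0.
have t2_gt0 : 0 < 1 + t^-1 by rewrite addr_gt0 ?invr_gt0.
have [N1 ltN1] := invSn_lt (divr_gt0 e_gt0 (mulr_gt0 (ltr0n _ 2) t1_gt0)).
have [N2 ltN2] := ul _ (divr_gt0 e_gt0 (mulr_gt0 (ltr0n _ 2) t2_gt0)).
pose k := maxn N1 N2; have := ltN1 k (leq_maxl _ _); have := ltN2 k (leq_maxr _ _).
rewrite !ltr_pdivlMr ?mulr_gt0 // => lt_l lt_k.
rewrite -(subrKA (u k) y); apply: le_trans (hnorm2D_le ipP _ _ t_gt0) _.
move: (lt_u k) lt_k; move: (k.+1%:R^-1) => ik; nra.
Qed.

Lemma exists_min_hclosure V y : linear_subspace V ->
  exists2 p, hclosure V p & forall q, hclosure V q -> n (y - p) <= n (y - q).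
Proof.
move=> subV; pose D := [set n (y - v) | v in V].
have D_inf : has_inf D.
  split; first by exists (n (y - 0)), 0 => //; case: subV.
  by exists 0 => _ [v _ <-]; apply: hnorm2_ge0.
set d := inf D.
have lb v : V v -> d <= n (y - v) by move=> Vv; apply: ge_inf; [case: D_inf | exists v].
have /choice [vs vsP] k : exists v, V v /\ n (y - v) < d + (k.+1%:R)^-1.
  have [_ [v Vv <-] lt_v] := inf_adherent (invSn_gt0 R k) D_inf.
  by exists v.
have Vvs k : V (vs k) by case: (vsP k).
have [p vs_p] : exists p, hcvg vs p.
  apply: (hcvg_of_rate (ltr0n _ 2)) => k m.
  apply: le_trans (parallelogram_min subV lb (Vvs k) (Vvs m)) _.
  have [[_ ltk] [_ ltm]] := (vsP k, vsP m).
  by move: ltk ltm; move: (k.+1%:R^-1) (m.+1%:R^-1) => ik im; lra.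
exists p => [|q clq]; first exact: hcvg_hclosure vs_p.
apply: le_trans (hclosure_lb lb clq).
apply: (hnorm2_le_of_hcvg vs_p); last by move=> k; case: (vsP k).
by apply: lb_le_inf; [case: D_inf | move=> _ [v _ <-]; apply: hnorm2_ge0].
Qed.

Lemma orthogonal_projection V y : linear_subspace V ->
  exists2 p, hclosure V p & perp V (y - p).
Proof.
move=> subV; have [p clp p_min] := exists_min_hclosure y subV.
exists p => // w Vw; apply: perp_of_min => s.
rewrite -addrA -[s]opprK scaleNr -opprD; apply: p_min.
have subclV := hclosure_linear_subspace subV.
by apply: linear_subspaceD clp _ => //; apply: linear_subspaceZ (hclosure_sub Vw).
Qed.

End Hilbert.

Section SeqNotin.
Variable T : eqType.
Implicit Types s t : seq T.

Lemma uniq_cat_notin s t : uniq s -> uniq t -> uniq (s ++ [seq g <- t | g \notin s]).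
Proof.
move=> s_uniq t_uniq; rewrite cat_uniq s_uniq filter_uniq // andbT /=.
by apply/hasPn => g; rewrite mem_filter => /andP[].
Qed.

Lemma sub_cat_notin s t : {subset t <= s ++ [seq g <- t | g \notin s]}.
Proof. by move=> g t_g; rewrite mem_cat mem_filter t_g andbT orbN. Qed.

Lemma filter_notin_sub s t : {subset s <= t} -> [seq g <- s | g \notin t] = [::].
Proof. by move=> sub_st; rewrite (@eq_in_filter _ _ pred0) ?filter_pred0 // => g /sub_st ->. Qed.

Lemma big_sub_notin (V : zmodType) (F : T -> V) s t : uniq s -> uniq t ->
  \sum_(g <- t) F g - \sum_(g <- s) F g =
  \sum_(g <- [seq g <- t | g \notin s]) F g - \sum_(g <- [seq g <- s | g \notin t]) F g.
Proof.
move=> s_uniq t_uniq.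
rewrite [\sum_(g <- t) _](bigID (mem s)) [\sum_(g <- s) _](bigID (mem t)) /=.
rewrite -[\sum_(i <- t | i \notin s) F i]big_filter.
rewrite -[\sum_(i <- s | i \notin t) F i]big_filter.
have -> : \sum_(g <- t | g \in s) F g = \sum_(g <- s | g \in t) F g.
  rewrite -big_filter -[RHS]big_filter; apply/perm_big/uniq_perm; rewrite ?filter_uniq //.
  by move=> g; rewrite !mem_filter andbC.
by rewrite opprD addrACA subrr add0r.
Qed.

End SeqNotin.

Lemma sum_notin_le (R : numDomainType) (T : eqType) (p : T -> R) (r : R) s t :
  (forall u, uniq u -> \sum_(g <- u) p g <= r) -> uniq s -> uniq t ->
  \sum_(g <- [seq g <- t | g \notin s]) p g <= r - \sum_(g <- s) p g.
Proof.
move=> le_r s_uniq t_uniq; rewrite lerBrDl -big_cat.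
exact/le_r/uniq_cat_notin.
Qed.

Section Unitary.
Variables (R : realType) (H : lmodType R[i]) (ip : H -> H -> R[i]) (U : H -> H).
Hypothesis UU : unitary ip U.
Implicit Types (x y : H) (s : R[i]).

Lemma unitaryD x y : U (x + y) = U x + U y.
Proof. by case: UU => lin _ _; have := lin 1 x y; rewrite !scale1r. Qed.

Lemma unitary0 : U 0 = 0.
Proof. by apply: (addrI (U 0)); rewrite -unitaryD !addr0. Qed.

Lemma unitaryZ s x : U (s *: x) = s *: U x.
Proof. by case: UU => lin _ _; have := lin s x 0; rewrite !addr0 unitary0 addr0. Qed.

Lemma unitaryB x y : U (x - y) = U x - U y.
Proof. by rewrite unitaryD -scaleN1r unitaryZ scaleN1r. Qed.

Lemma unitary_sum (I : Type) (r : seq I) (F : I -> H) :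
  U (\sum_(i <- r) F i) = \sum_(i <- r) U (F i).
Proof. by elim: r => [|i r IH]; rewrite ?big_nil ?unitary0 // !big_cons unitaryD IH. Qed.

Lemma unitary_ip x y : ip (U x) (U y) = ip x y.
Proof. by case: UU. Qed.

Lemma unitary_hnorm2 x : hnorm2 ip (U x) = hnorm2 ip x.
Proof. by rewrite /hnorm2 unitary_ip. Qed.

Lemma unitary_surj y : exists x, U x = y.
Proof. by case: UU. Qed.

End Unitary.

Section Synthesis.
Variables (R : realType) (H : lmodType R[i]) (ip : H -> H -> R[i]).
Hypothesis ipP : is_inner_product ip.
Hypothesis ipc : ip_complete ip.
Local Notation n := (hnorm2 ip).
Variables (G : groupType) (pi : G -> H -> H) (eta : H) (A B : R).
Hypothesis A_gt0 : 0 < A.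
Hypothesis B_gt0 : 0 < B.
Hypothesis riesz : forall (s : seq G) (c : G -> R[i]), uniq s ->
  A * \sum_(g <- s) sqmod (c g) <= n (\sum_(g <- s) c g *: pi g eta)
                                <= B * \sum_(g <- s) sqmod (c g).
Implicit Types (c : G -> R[i]) (s t : seq G) (v w : H).

Definition synth t c : H := \sum_(g <- t) c g *: pi g eta.

Definition synth_to c v := forall e, 0 < e -> exists s0, forall t,
  uniq t -> {subset s0 <= t} -> n (synth t c - v) < e.

Lemma synth_lower t c : uniq t -> A * \sum_(g <- t) sqmod (c g) <= n (synth t c).
Proof. by move=> /(riesz c) /andP[]. Qed.

Lemma synth_upper t c : uniq t -> n (synth t c) <= B * \sum_(g <- t) sqmod (c g).
Proof. by move=> /(riesz c) /andP[]. Qed.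

Lemma synthDZ t a c1 c2 :
  synth t (fun g => a * c1 g + c2 g) = a *: synth t c1 + synth t c2.
Proof.
rewrite /synth scaler_sumr -big_split /=.
by apply: eq_bigr => g _; rewrite scalerDl scalerA.
Qed.

Lemma synth_toDZ a c1 c2 v1 v2 : synth_to c1 v1 -> synth_to c2 v2 ->
  synth_to (fun g => a * c1 g + c2 g) (a *: v1 + v2).
Proof.
move=> c1_v1 c2_v2 e e_gt0.
have a_gt0 : 0 < 4 * (sqmod a + 1) by have := sqmod_ge0 a; lra.
have [s1 lt1] := c1_v1 _ (divr_gt0 e_gt0 a_gt0).
have [s2 lt2] := c2_v2 _ (divr_gt0 e_gt0 (ltr0n _ 4)).
exists (s1 ++ s2) => t t_uniq sub_t.
have /(lt1 t t_uniq) {}lt1 : {subset s1 <= t} by move=> g s1g; rewrite sub_t ?mem_cat ?s1g.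
have /(lt2 t t_uniq) {}lt2 : {subset s2 <= t} by move=> g s2g; rewrite sub_t ?mem_cat ?s2g ?orbT.
by rewrite synthDZ opprD addrACA -scalerBr (hnorm2DZ_lt ipP).
Qed.

Lemma synth_to0 : synth_to (fun _ => 0) 0.
Proof.
move=> e e_gt0; exists [::] => t _ _.
by rewrite /synth big1 => [|g _]; rewrite ?scale0r // subrr hnorm20.
Qed.

Lemma synth_toB c1 c2 v1 v2 : synth_to c1 v1 -> synth_to c2 v2 ->
  synth_to (fun g => c1 g - c2 g) (v1 - v2).
Proof.
move=> c1_v1 c2_v2; have := synth_toDZ (-1) c2_v2 c1_v1.
have -> : (fun g => -1 * c2 g + c1 g) = (fun g => c1 g - c2 g).
  by apply: funext => g; rewrite mulN1r addrC.
by rewrite scaleN1r addrC.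
Qed.

Lemma synth_sub_le c s t : uniq s -> uniq t ->
  n (synth t c - synth s c) <= 2 * B *
    (\sum_(g <- [seq g <- t | g \notin s]) sqmod (c g) +
     \sum_(g <- [seq g <- s | g \notin t]) sqmod (c g)).
Proof.
move=> s_uniq t_uniq; rewrite /synth big_sub_notin //.
apply: le_trans (hnorm2D_le2 ipP _ _) _; rewrite (hnorm2N ipP).
have := synth_upper c (filter_uniq [pred g | g \notin s] t_uniq).
have := synth_upper c (filter_uniq [pred g | g \notin t] s_uniq).
rewrite /synth; lra.
Qed.

Lemma synth_to_exists c : in_l2 c -> exists v, synth_to c v.
Proof.
move=> /(finite_esum_sup (fun g => sqmod_ge0 (c g))) [r [le_r approx]].
pose rest t := r - \sum_(g <- t) sqmod (c g).
(* [ts k] carries all but [1/(k+1)] of the l^2 mass of [c]; by the upper Riesz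
   bound, the synthesis over indices outside it is correspondingly small. *)
have /choice [ts tsP] k : exists t, uniq t /\ rest t < k.+1%:R^-1.
  have [t t_uniq lt_t] := approx _ (invSn_gt0 R k).
  by exists t; split => //; move: lt_t; rewrite /rest; move: (k.+1%:R^-1) => ik; lra.
have diff_le s t : uniq s -> uniq t ->
    n (synth t c - synth s c) <= 2 * B * (rest s + rest t).
  move=> s_uniq t_uniq; apply: le_trans (synth_sub_le c s_uniq t_uniq) _.
  rewrite ler_pM2l ?mulr_gt0 //.
  by apply: lerD; apply: sum_notin_le.
have [v ts_v] : exists v, hcvg ip (fun k => synth (ts k) c) v.
  apply: (hcvg_of_rate ipc (mulr_gt0 (ltr0n _ 2) B_gt0)) => k m.
  have [[tk_uniq ltk] [tm_uniq ltm]] := (tsP k, tsP m).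
  apply: le_trans (diff_le _ _ tm_uniq tk_uniq) _.
  rewrite ler_pM2l ?mulr_gt0 //; move: ltk ltm.
  by move: (k.+1%:R^-1) (m.+1%:R^-1) => ik im; lra.
exists v => e e_gt0.
have [N1 ltN1] := invSn_lt (divr_gt0 e_gt0 (mulr_gt0 (ltr0n _ 8) B_gt0)).
have [N2 ltN2] := ts_v _ (divr_gt0 e_gt0 (ltr0n _ 4)).
pose k := maxn N1 N2; have [tk_uniq ltk] := tsP k.
exists (ts k) => t t_uniq sub_t.
apply: le_lt_trans (hnorm2_split ipP _ (synth (ts k) c) _) _.
have : n (synth t c - synth (ts k) c) <= 2 * B * rest (ts k).
  apply: le_trans (synth_sub_le c tk_uniq t_uniq) _.
  rewrite (filter_notin_sub sub_t) big_nil addr0 ler_pM2l ?mulr_gt0 //.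
  exact: sum_notin_le.
have := ltN2 k (leq_maxr _ _); have := ltN1 k (leq_maxl _ _).
rewrite ltr_pdivlMr ?mulr_gt0 //; move: ltk; move: (k.+1%:R^-1) (rest (ts k)) => ik rk.
by rewrite -(ltr_pM2l B_gt0); lra.
Qed.

Lemma esum_le_synth_to c v : synth_to c v ->
  (\esum_(g in [set: G]) (sqmod (c g))%:E <= (2 * n v / A)%:E)%E.
Proof.
move=> c_v; apply: esum_le => t t_uniq.
rewrite ler_pdivlMr // mulrC; apply/ler_addgt0Pr => e e_gt0.
have [s0 lt_s0] := c_v _ (divr_gt0 e_gt0 (ltr0n _ 2)).
pose t' := t ++ [seq g <- undup s0 | g \notin t].
have t'_uniq : uniq t' by apply: uniq_cat_notin; rewrite ?undup_uniq.
have /(lt_s0 _ t'_uniq) lt_t' : {subset s0 <= t'}.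
  by move=> g s0g; apply: sub_cat_notin; rewrite mem_undup.
have le_t' : A * \sum_(g <- t) sqmod (c g) <= A * \sum_(g <- t') sqmod (c g).
  by rewrite ler_pM2l // big_cat lerDl sumr_ge0 // => g _; apply: sqmod_ge0.
have := synth_lower c t'_uniq; have := hnorm2D_le2 ipP v (synth t' c - v).
by rewrite addrC subrK; lra.
Qed.

End Synthesis.

Section Representation.
Variables (R : realType) (H : lmodType R[i]) (ip : H -> H -> R[i]).
Hypothesis ipP : is_inner_product ip.
Hypothesis ipc : ip_complete ip.
Local Notation n := (hnorm2 ip).
Variables (G : groupType) (pi : G -> H -> H) (mu : G -> G -> R[i]).
Hypothesis piU : forall g, unitary ip (pi g).
Hypothesis mu_norm : forall g h, `|mu g h| = 1.
Hypothesis piM : forall g h x, pi g (pi h x) = mu g h *: pi (g * h)%g x.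
Variables (eta : H) (A B : R).
Hypothesis A_gt0 : 0 < A.
Hypothesis B_gt0 : 0 < B.
Hypothesis riesz : forall (s : seq G) (c : G -> R[i]), uniq s ->
  A * \sum_(g <- s) sqmod (c g) <= n (\sum_(g <- s) c g *: pi g eta)
                                <= B * \sum_(g <- s) sqmod (c g).
Variable xi : H.
Local Notation synth := (synth pi eta).
Local Notation synth_to := (synth_to ip pi eta).
Local Notation theta := (theta ip pi).
Implicit Types (c : G -> R[i]) (V : set H) (t : seq G) (v w x y z : H).

Lemma pi1 x : pi 1%g x = mu 1%g 1%g *: x.
Proof. by have [y <-] := unitary_surj (piU 1%g) x; rewrite piM mulg1. Qed.

Lemma piVK h x : pi h^-1%g (pi h x) = (mu h^-1%g h * mu 1%g 1%g) *: x.
Proof. by rewrite piM mulVg pi1 scalerA. Qed.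

Lemma pi_mul g h x : pi (g * h)%g x = (mu g h)^* *: pi g (pi h x).
Proof. by rewrite piM scalerA -normCKC mu_norm expr1n scale1r. Qed.

Lemma theta_pi_mul h z g :
  theta xi (pi h z) (h * g)%g *: pi (h * g)%g eta = pi h (theta xi z g *: pi g eta).
Proof.
rewrite /theta !pi_mul (ipZr ipP) (unitary_ip (piU h)) (unitaryZ (piU h)) scalerA.
by congr (_ *: _); rewrite conjCK mulrAC -normCK mu_norm expr1n mul1r.
Qed.

Lemma synth_map_mul h z t :
  synth [seq (h * g)%g | g <- t] (theta xi (pi h z)) = pi h (synth t (theta xi z)).
Proof.
rewrite /synth big_map (unitary_sum (piU h)).
by apply: eq_bigr => g _; rewrite theta_pi_mul.
Qed.

Lemma synth_to_pi h z v : synth_to (theta xi z) v -> synth_to (theta xi (pi h z)) (pi h v).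
Proof.
move=> z_v e e_gt0; have [s0 lt_s0] := z_v e e_gt0.
exists [seq (h * g)%g | g <- s0] => t t_uniq sub_t.
pose t' := [seq (h^-1 * g)%g | g <- t].
have -> : t = [seq (h * g)%g | g <- t'].
  by rewrite -map_comp (eq_map (mulVKg h)) map_id.
rewrite synth_map_mul -(unitaryB (piU h)) (unitary_hnorm2 (piU h)).
apply: lt_s0; first by rewrite map_inj_uniq //; apply: mulgI.
by move=> g s0g; rewrite -[g](mulKg h); apply/map_f/sub_t/map_f.
Qed.

Definition synth_range : set H := fun v => exists z, synth_to (theta xi z) v.

Lemma thetaDZ a y z : theta xi (a *: y + z) = (fun g => a * theta xi y g + theta xi z g).
Proof. by apply: funext => g; rewrite /theta (ipDZl ipP). Qed.

Lemma synth_range_linear_subspace : linear_subspace synth_range.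
Proof.
split=> [|a v w [y y_v] [z z_w]].
  exists 0; have -> : theta xi 0 = (fun _ => 0).
    by apply: funext => g; rewrite /theta (ip0l ipP).
  exact: synth_to0.
by exists (a *: y + z); rewrite thetaDZ; apply: synth_toDZ.
Qed.

Lemma synth_range_pi h v : synth_range v -> synth_range (pi h v).
Proof. by move=> [z z_v]; exists (pi h z); apply: synth_to_pi. Qed.

Lemma perp_pi V h x : (forall g v, V v -> V (pi g v)) ->
  perp ip V x -> perp ip V (pi h x).
Proof.
move=> piV xV w Vw; rewrite -(unitary_ip (piU h^-1%g)) piVK (ipZl ipP) xV ?mulr0 //.
exact: piV.
Qed.

Lemma hclosure_pi V h v : (forall g v, V v -> V (pi g v)) ->
  hclosure ip V v -> hclosure ip V (pi h v).
Proof.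
move=> piV clv e e_gt0; have [w Vw lt_vw] := clv e e_gt0.
exists (pi h w); first exact: piV.
by rewrite -(unitaryB (piU h)) (unitary_hnorm2 (piU h)).
Qed.

Lemma synth_hclosure V t c : linear_subspace V -> (forall g, hclosure ip V (pi g eta)) ->
  hclosure ip V (synth t c).
Proof.
move=> subV V_eta; have [cl0 cl_lin] := hclosure_linear_subspace ipP subV.
by elim: t => [|g t IH]; rewrite /synth ?big_nil ?big_cons //; apply: cl_lin.
Qed.

Lemma synth_to_hclosure V c v : linear_subspace V -> (forall g, hclosure ip V (pi g eta)) ->
  synth_to c v -> hclosure ip V v.
Proof.
move=> subV V_eta c_v; apply: (hclosure_idem ipP) => e e_gt0.
have [s0 lt_s0] := c_v e e_gt0.
exists (synth (undup s0) c); first exact: synth_hclosure.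
by rewrite (hnorm2BC ipP) lt_s0 ?undup_uniq // => g; rewrite mem_undup.
Qed.

Lemma theta_range_dense : hclosure ip synth_range eta -> dense_in_l2 (theta_range ip pi xi).
Proof.
move=> cl_eta b b_l2 e e_gt0.
have V_eta g : hclosure ip synth_range (pi g eta).
  exact: hclosure_pi synth_range_pi cl_eta.
have [v b_v] := synth_to_exists ipP ipc B_gt0 riesz b_l2.
have cl_v := synth_to_hclosure synth_range_linear_subspace V_eta b_v.
have [w [z z_w] lt_vw] := cl_v _ (divr_gt0 (mulr_gt0 e_gt0 A_gt0) (ltr0n _ 2)).
exists (theta xi z).
  by exists z => //; apply: le_lt_trans (esum_le_synth_to ipP A_gt0 riesz z_w) (ltry _).
apply: le_lt_trans (esum_le_synth_to ipP A_gt0 riesz (synth_toB ipP z_w b_v)) _.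
rewrite lte_fin (hnorm2BC ipP) ltr_pdivrMr //; rewrite ltr_pdivlMr // in lt_vw; lra.
Qed.

Lemma theta_residual p y py h :
  hclosure ip synth_range p -> perp ip synth_range (eta - p) ->
  hclosure ip synth_range py -> perp ip synth_range (y - py) ->
  theta (eta - p) y h = ip (y - py) (pi h eta).
Proof.
move=> cl_p eta_p cl_py y_py; rewrite /theta -{1}(subrK py y) (ipDl ipP (y - py)) (ipC ipP _ py).
rewrite (perp_hclosure ipP (perp_pi h synth_range_pi eta_p) cl_py) rmorph0 addr0.
rewrite (unitaryB (piU h)) (ipBr ipP).
by rewrite (perp_hclosure ipP y_py (hclosure_pi h synth_range_pi cl_p)) subr0.
Qed.

Lemma l2_ip_synth_to q c w : synth_to c w -> l2_ip_is (fun g => ip q (pi g eta)) c (ip q w).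
Proof.
move=> c_w e e_gt0; have nq_ge0 := hnorm2_ge0 ipP q.
have d_gt0 : 0 < e ^+ 2 / (n q + 1) by rewrite divr_gt0 ?exprn_gt0 //; lra.
have [s0 lt_s0] := c_w _ d_gt0; exists s0 => t t_uniq sub_t.
have -> : \sum_(g <- t) ip q (pi g eta) * (c g)^* = ip q (synth t c).
  by rewrite (ip_sumr ipP); apply: eq_bigr => g _; rewrite (ipZr ipP) mulrC.
rewrite -(ipBr ipP); apply: Re_normc_lt => //.
apply: le_lt_trans (cauchy_schwarz ipP _ _) _.
have := lt_s0 t t_uniq sub_t; rewrite ltr_pdivlMr; last lra.
by have := hnorm2_ge0 ipP (synth t c - w); nra.
Qed.

Lemma theta_range_perp p : hclosure ip synth_range p -> perp ip synth_range (eta - p) ->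
  l2_orthogonal (theta_range ip pi (eta - p)) (theta_range ip pi xi).
Proof.
move=> cl_p eta_p _ _ [y _ ->] [z z_l2 ->].
have [py cl_py y_py] := orthogonal_projection ipP ipc y synth_range_linear_subspace.
have [w z_w] := synth_to_exists ipP ipc B_gt0 riesz z_l2.
have := l2_ip_synth_to (y - py) z_w; rewrite y_py; last by exists z.
by rewrite /l2_ip_is (funext (fun h => theta_residual h cl_p eta_p cl_py y_py)).
Qed.

Lemma perp_theta_range_of_not_dense : ~ dense_in_l2 (theta_range ip pi xi) ->
  exists2 x, x <> 0 & l2_orthogonal (theta_range ip pi x) (theta_range ip pi xi).
Proof.
move=> not_dense.
have [p cl_p eta_p] := orthogonal_projection ipP ipc eta synth_range_linear_subspace.
exists (eta - p); last exact: theta_range_perp.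
by move=> /subr0_eq eta_eq; apply/not_dense/theta_range_dense; rewrite eta_eq.
Qed.

End Representation.

Theorem lemma3p9 (R : realType) (H : lmodType R[i]) (ip : H -> H -> R[i])
  (G : groupType) (pi : G -> H -> H) (xi : H) :
  is_hilbert ip ->
  countable_type G ->
  proj_unitary_rep ip pi ->
  bessel_dense ip pi ->
  (exists eta : H, riesz_vector ip pi eta) ->
  ~ dense_in_l2 (theta_range ip pi xi) ->
  exists2 x : H, x <> 0 &
    l2_orthogonal (theta_range ip pi x) (theta_range ip pi xi).
Proof.
move=> [ipP ipc] _ [piU [mu [mu_norm piM]]] _ [eta [A [B [A_gt0 [B_gt0 riesz]]]]].
exact: (perp_theta_range_of_not_dense ipP ipc piU mu_norm piM A_gt0 B_gt0 riesz).
Qed.
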